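(* Let $f:\mathbb{R}\to\mathbb{R}$ satisfy $f(0)=0$ and $|f(u)-f(v)|\leq C|u-v|(e^{\lambda u^2}+e^{\lambda v^2})$ for all $u,v\in\mathbb{R}$, for some constants $C,\lambda>0$. Let $v\in L^\infty(\mathbb{R}^N)$ and $w_1,w_2\in\exp L^2(\mathbb{R}^N)$ with $\|w_1\|_{\exp L^2},\|w_2\|_{\exp L^2}\leq K$ for some $K>0$. Let $2\leq q<\infty$ and assume $4\lambda qK^2\leq1$. Then there exists a constant $C_q>0$ depending on $q$ such that $$\|f(w_1+v)-f(w_2+v)\|_{L^q}\leq C_q\,e^{2\lambda\|v\|_{L^\infty}^2}\|w_1-w_2\|_{\exp L^2}.$$
   Context: The Orlicz space $\exp L^2(\mathbb{R}^N)$ is the set of $u\in L^1_{loc}(\mathbb{R}^N)$ such that $\int_{\mathbb{R}^N}(e^{|u(x)|^2/\alpha^2}-1)\,dx<\infty$ for some $\alpha>0$, with the Luxemburg norm $\|u\|_{\exp L^2}=\inf\{\alpha>0:\int_{\mathbb{R}^N}(e^{|u(x)|^2/\alpha^2}-1)\,dx\leq 1\}$. *)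

From HB Require Import structures.
From mathcomp Require Import all_boot all_order all_algebra.
From mathcomp Require Import all_classical all_reals all_analysis.
Set Implicit Arguments. Unset Strict Implicit. Unset Printing Implicit Defensive.
Import Order.TTheory GRing.Theory Num.Theory.
Import numFieldNormedType.Exports.
Local Open Scope classical_set_scope.
Local Open Scope ring_scope.

Section OrliczExpL2.
Context {d : measure_display} {T : measurableType d} {R : realType}.
Variable mu : {measure set T -> \bar R}.

Definition expL2_integral (u : T -> R) (a : R) : \bar R :=
  (\int[mu]_x ((expR (`|u x| ^+ 2 / a ^+ 2) - 1)%:E))%E.

Definition in_expL2 (u : T -> R) : Prop :=
  measurable_fun setT u /\ exists a : R, 0 < a /\ (expL2_integral u a < +oo)%E.

Definition expL2_norm (u : T -> R) : \bar R :=
  ereal_inf [set a%:E | a in [set a : R | 0 < a /\ (expL2_integral u a <= 1)%E]].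

Definition in_Linf (v : T -> R) : Prop :=
  measurable_fun setT v /\ ('N[mu]_(+oo%E)[EFin \o v] < +oo)%E.

Definition Linf_norm (v : T -> R) : R := fine ('N[mu]_(+oo%E)[EFin \o v]).

End OrliczExpL2.

From HB Require Import structures.
From mathcomp Require Import all_boot all_order all_algebra.
From mathcomp Require Import all_classical all_reals all_analysis.
From mathcomp Require Import measurable_realfun ess_sup_inf.
From mathcomp Require Import ring lra.
Import Order.TTheory GRing.Theory Num.Theory.
Import numFieldNormedType.Exports.
Local Open Scope classical_set_scope.
Local Open Scope ring_scope.

(* Put D = w1 - w2, G = exp (2 lam |v|_oo^2) and s = max (|w1|^2, |w2|^2).  As
   (w + v)^2 <= 2 w^2 + 2 |v|_oo^2, the growth condition gives pointwise
   |f (w1 + v) - f (w2 + v)| <= 2 C G |D| exp (2 lam s).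
   Fix a above the Luxemburg norm of D, so that the Orlicz integral of D at a is
   at most 1, and put rho = |D| / a, h = exp (q lam s).  Young's inequality gives
   rho^q h^2 <= rho^q + rho^(3q) + (h^3 - 1), where both powers of rho are bounded
   by a multiple of exp (rho^2) - 1, and h^3 - 1 by the sum of the Orlicz
   integrands of w1 and w2 at a level b > K with 3 lam q b^2 <= 1; such a b exists
   because 4 lam q K^2 <= 1, and the Orlicz integrals at b are at most 1.
   Integrating gives |f (w1 + v) - f (w2 + v)|_q <= C_q G a for every such a. *)

Section real_inequalities.
Context {R : realType}.

Lemma expR_subr1_ge0 {x : R} : 0 <= x -> 0 <= expR x - 1.
Proof. by move=> x0; have := expR_ge1Dx x; lra. Qed.

(* With h = 1 + t: x (2t + t^2) <= t (x^2 + 1) + x t^2, and AM-GM bounds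
   t x^2 and x t^2 by combinations of x^3 and t^3. *)
Lemma ler_mul_sqr_cube {x h : R} : 0 <= x -> 1 <= h ->
  x * h ^+ 2 <= x + x ^+ 3 + (h ^+ 3 - 1).
Proof.
move=> x0 h1.
have [t t0 ->] : exists2 t, 0 <= t & h = 1 + t by exists (h - 1); [lra | ring].
have := mulr_ge0 t0 (sqr_ge0 (x - 1)).
have : 0 <= (x - t) ^+ 2 * (2 * x + t) by apply: mulr_ge0; [exact: sqr_ge0 | lra].
have : 0 <= (x - t) ^+ 2 * (x + 2 * t) by apply: mulr_ge0; [exact: sqr_ge0 | lra].
nra.
Qed.

Lemma powR_le_expR_sqr (rho p : R) (m : nat) : 0 <= rho -> 2 <= p -> p <= m.+1%:R ->
  rho `^ p <= (1 + m.+1`!%:R) * (expR (rho ^+ 2) - 1).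
Proof.
move=> rho0 p2 pm.
have sqr_le : rho ^+ 2 <= expR (rho ^+ 2) - 1 by have := expR_ge1Dx (rho ^+ 2); lra.
have pow_le : (rho ^+ 2) ^+ m.+1 <= m.+1`!%:R * (expR (rho ^+ 2) - 1).
  have := expR_ge1Dxn m (sqr_ge0 rho).
  by rewrite -ler_pdivrMl ?ltr0n ?fact_gt0// mulrC; lra.
suff : rho `^ p <= rho ^+ 2 + (rho ^+ 2) ^+ m.+1 by rewrite mulrDl mul1r; lra.
have pow_ge0 : 0 <= (rho ^+ 2) ^+ m.+1 by rewrite exprn_ge0 ?sqr_ge0.
case: (lerP rho 1) => [rho1 | rho1].
  move: rho0; rewrite le_eqVlt => /predU1P[<- | rho_gt0].
    by rewrite powR0 ?expr0n ?add0r //; apply/eqP => p0; rewrite p0 in p2; lra.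
  apply: ler_wpDr => //; rewrite -(powR_mulrn _ (ltW rho_gt0)).
  by apply: ger_powR => //; rewrite rho_gt0 rho1.
apply: ler_wpDl; first exact: sqr_ge0.
rewrite -exprM -powR_mulrn//; apply: ler_powR; first exact: ltW.
by apply: (le_trans pm); rewrite ler_nat mulSn addSn ltnS leq_addr.
Qed.

Lemma expR_sqrD_le (lam W V M : R) : 0 <= lam -> `|V| <= M ->
  expR (lam * (W + V) ^+ 2) <= expR (2 * lam * M ^+ 2) * expR (2 * lam * `|W| ^+ 2).
Proof.
move=> lam0 VM; rewrite -expRD ler_expR.
have VM2 : V ^+ 2 <= M ^+ 2.
  by rewrite -real_normK ?num_real// ler_sqr ?nnegrE// (le_trans _ VM).
have := sqr_ge0 (W - V); rewrite real_normK ?num_real//; nra.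
Qed.

Local Open Scope ereal_scope.

Lemma lee_pmul_of_gt (k : R) (N X : \bar R) : (0 < k)%R -> 0 <= N ->
  (forall a, (0 < a)%R -> N < a%:E -> X <= (k * a)%:E) -> X <= k%:E * N.
Proof.
move=> k0; case: N => [r r0 XN | _ _ | //]; last by rewrite gt0_muley ?leey// lte_fin.
rewrite lee_fin in r0; apply/lee_addgt0Pr => e e0.
have ek0 : (0 < e / k)%R by rewrite divr_gt0.
apply: le_trans (XN (r + e / k)%R _ _) _; [by rewrite ltr_wpDl | by rewrite lte_fin ltrDl |].
rewrite -EFinM -EFinD (_ : k * (r + e / k) = k * r + e)%R //.
by field; rewrite gt_eqF.
Qed.

End real_inequalities.

Section growth_condition.
Context {R : realType} {f : R -> R} {C lam : R}.
Hypotheses (C_ge0 : 0 <= C) (lam_ge0 : 0 <= lam).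
Hypothesis f_growth : forall u v : R,
  `|f u - f v| <= C * `|u - v| * (expR (lam * u ^+ 2) + expR (lam * v ^+ 2)).

Lemma growth_continuous : continuous f.
Proof.
move=> u; apply/subr_cvg0/norm_cvg0P.
pose g t := C * `|t - u| * (expR (lam * t ^+ 2) + expR (lam * u ^+ 2)).
have e_cont : {for u, continuous (fun x : R => expR (lam * x ^+ 2))}.
  apply: (continuous_comp (f := fun x : R => lam * x ^+ 2)); last exact: continuous_expR.
  by apply: cvgM; [exact: cvg_cst | apply: cvgM; exact: cvg_id].
have g0 : g x @[x --> u] --> 0.
  have -> : 0 = g u by rewrite /g subrr normr0 mulr0 mul0r.
  apply: cvgM; last by apply: cvgD; [exact: e_cont | exact: cvg_cst].
  by apply: cvgM; [exact: cvg_cst | apply: cvg_norm; apply: cvgB; [exact: cvg_id | exact: cvg_cst]].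
apply: (squeeze_cvgr _ (cvg_cst 0) g0).
by near=> t; rewrite normr_ge0 f_growth.
Unshelve. all: end_near. Qed.

Lemma growth_shift_le (W1 W2 V M : R) : `|V| <= M ->
  `|f (W1 + V) - f (W2 + V)| <= 2 * C * expR (2 * lam * M ^+ 2) * `|W1 - W2|
                                 * expR (2 * lam * Num.max (`|W1| ^+ 2) (`|W2| ^+ 2)).
Proof.
move=> VM; set G := expR (2 * lam * _); set s := Num.max _ _.
have exp_le W : `|W| ^+ 2 <= s -> expR (lam * (W + V) ^+ 2) <= G * expR (2 * lam * s).
  move=> Ws; apply: (le_trans (expR_sqrD_le _ W _ _ lam_ge0 VM)).
  apply: ler_wpM2l; first exact: expR_ge0.
  by rewrite ler_expR ler_wpM2l // mulr_ge0.
have := f_growth (W1 + V) (W2 + V).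
rewrite (_ : W1 + V - (W2 + V) = W1 - W2); last by ring.
move/le_trans; apply.
have CD : 0 <= C * `|W1 - W2| by rewrite mulr_ge0.
rewrite (_ : _ * expR _ = C * `|W1 - W2| * (G * expR (2 * lam * s) + G * expR (2 * lam * s)));
  last by ring.
by apply: ler_wpM2l => //; apply: lerD; apply: exp_le; rewrite le_max lexx ?orbT.
Qed.

Lemma growth_shift_powR_le (q a b M W1 W2 V : R) (m : nat) :
  2 <= q -> 3 * q <= m.+1%:R -> 0 < a -> 0 < b -> 3 * lam * q * b ^+ 2 <= 1 -> `|V| <= M ->
  `|f (W1 + V) - f (W2 + V)| `^ q <=
  (2 * C * expR (2 * lam * M ^+ 2) * a) `^ q *
  (2 * (1 + m.+1`!%:R) * (expR (`|W1 - W2| ^+ 2 / a ^+ 2) - 1)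
   + (expR (`|W1| ^+ 2 / b ^+ 2) - 1) + (expR (`|W2| ^+ 2 / b ^+ 2) - 1)).
Proof.
move=> q2 qm a0 b0 qb VM.
pose s := Num.max (`|W1| ^+ 2) (`|W2| ^+ 2); set B := _ * a; set c := 1 + _.
set rho := `|W1 - W2| / a; set h := expR (q * lam * s).
have s0 : 0 <= s by rewrite /s le_max sqr_ge0.
have B0 : 0 <= B by rewrite !mulr_ge0 ?expR_ge0 // ltW.
have rho0 : 0 <= rho by rewrite divr_ge0 // ltW.
have F_le : `|f (W1 + V) - f (W2 + V)| <= B * (rho * expR (2 * lam * s)).
  rewrite (_ : B * _ = 2 * C * expR (2 * lam * M ^+ 2) * `|W1 - W2| * expR (2 * lam * s)).
    exact: growth_shift_le.
  by rewrite /B /rho; field; rewrite gt_eqF.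
have Fq_le : `|f (W1 + V) - f (W2 + V)| `^ q <= B `^ q * (rho `^ q * h ^+ 2).
  have q0 : 0 <= q by lra.
  have E0 := expR_ge0 (2 * lam * s).
  have FB0 : 0 <= B * (rho * expR (2 * lam * s)) by rewrite mulr_ge0 // mulr_ge0.
  apply: (le_trans (ge0_ler_powR q0 (normr_ge0 _) FB0 F_le)).
  rewrite (powRM q B0 (mulr_ge0 rho0 E0)) (powRM q rho0 E0) -expRM /h -expRM_natl.
  by rewrite (_ : _ * q = 2%:R * (q * lam * s)); last by ring.
have x_le : rho `^ q <= c * (expR (`|W1 - W2| ^+ 2 / a ^+ 2) - 1).
  by rewrite -expr_div_n; apply: powR_le_expR_sqr => //; lra.
have x3_le : (rho `^ q) ^+ 3 <= c * (expR (`|W1 - W2| ^+ 2 / a ^+ 2) - 1).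
  rewrite -expr_div_n -powR_mulrn ?powR_ge0 // -powRrM.
  by apply: powR_le_expR_sqr => //; lra.
have h1 : 1 <= h by rewrite -expR0 ler_expR !mulr_ge0//; lra.
have h3_le : h ^+ 3 - 1 <= (expR (`|W1| ^+ 2 / b ^+ 2) - 1) + (expR (`|W2| ^+ 2 / b ^+ 2) - 1).
  have : h ^+ 3 <= expR (s / b ^+ 2).
    rewrite /h -expRM_natl ler_expR ler_pdivlMr ?exprn_gt0//.
    rewrite (_ : _ * b ^+ 2 = (3 * lam * q * b ^+ 2) * s); last by ring.
    by rewrite -[leRHS]mul1r ler_wpM2r.
  have := expR_subr1_ge0 (divr_ge0 (sqr_ge0 `|W1|) (sqr_ge0 b)).
  have := expR_subr1_ge0 (divr_ge0 (sqr_ge0 `|W2|) (sqr_ge0 b)).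
  by rewrite /s maxEle; case: ifP => _; lra.
apply: (le_trans Fq_le); apply: ler_wpM2l; first exact: powR_ge0.
have := ler_mul_sqr_cube (powR_ge0 rho q) h1; lra.
Qed.

End growth_condition.

Section expL2_integral_facts.
Context {d : measure_display} {T : measurableType d} {R : realType}.
Variable mu : {measure set T -> \bar R}.

Definition expL2_integrand (u : T -> R) (a : R) (x : T) : R :=
  expR (`|u x| ^+ 2 / a ^+ 2) - 1.

Lemma expL2_integrand_ge0 (u : T -> R) (a : R) (x : T) : 0 <= expL2_integrand u a x.
Proof. by apply: expR_subr1_ge0; rewrite divr_ge0 ?sqr_ge0. Qed.

Lemma measurable_expL2_integrand (u : T -> R) (a : R) :
  measurable_fun setT u -> measurable_fun setT (expL2_integrand u a).
Proof.
move=> mu_; apply: measurable_funB => //; apply: measurableT_comp => //.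
by apply: measurable_funM => //; apply: measurable_funX; exact: measurableT_comp.
Qed.

Local Open Scope ereal_scope.

Lemma emeasurable_expL2_integrand (u : T -> R) (a : R) : measurable_fun setT u ->
  measurable_fun setT (fun x => (expL2_integrand u a x)%:E).
Proof. by move=> mu_; apply/measurable_EFinP; exact: measurable_expL2_integrand. Qed.

Lemma expL2_integral_le (u : T -> R) (a b : R) : measurable_fun setT u ->
  (0 < a)%R -> (a <= b)%R -> expL2_integral mu u b <= expL2_integral mu u a.
Proof.
move=> mu_ a0 ab; apply: ge0_le_integral => //.
- by move=> x _; rewrite lee_fin expL2_integrand_ge0.
- exact: emeasurable_expL2_integrand.
- exact: emeasurable_expL2_integrand.
move=> x _; rewrite lee_fin lerD2r ler_expR ler_wpM2l ?sqr_ge0//.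
have b0 := lt_le_trans a0 ab.
by rewrite lef_pV2 ?posrE ?exprn_gt0// ler_sqr ?nnegrE ?(ltW a0) ?(ltW b0).
Qed.

Lemma expL2_integral_le1 (u : T -> R) (a : R) : measurable_fun setT u ->
  expL2_norm mu u < a%:E -> expL2_integral mu u a <= 1.
Proof.
move=> mu_ /ereal_inf_lt[_ [b [b0 int_b] <-]]; rewrite lte_fin => ba.
by apply: le_trans int_b; apply: expL2_integral_le => //; exact: ltW.
Qed.

Lemma expL2_norm_ge0 (u : T -> R) : 0 <= expL2_norm mu u.
Proof. by apply: le_ereal_inf_tmp => _ [b [b0 _] <-]; rewrite lee_fin ltW. Qed.

Lemma integral_expL2_comb (u w1 w2 : T -> R) (a b A c : R) :
  measurable_fun setT u -> measurable_fun setT w1 -> measurable_fun setT w2 ->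
  (0 <= A)%R -> (0 <= c)%R ->
  \int[mu]_x (A * (c * expL2_integrand u a x + expL2_integrand w1 b x
                   + expL2_integrand w2 b x))%:E
  = A%:E * (c%:E * expL2_integral mu u a + expL2_integral mu w1 b
            + expL2_integral mu w2 b).
Proof.
move=> mu_ mw1 mw2 A0 c0.
have ge0 (w : T -> R) r x : 0 <= (expL2_integrand w r x)%:E.
  by rewrite lee_fin expL2_integrand_ge0.
have ge0_c x : 0 <= c%:E * (expL2_integrand u a x)%:E by rewrite mule_ge0.
have me1 := emeasurable_expL2_integrand w1 b mw1.
have me2 := emeasurable_expL2_integrand w2 b mw2.
have m_c : measurable_fun setT (fun x => c%:E * (expL2_integrand u a x)%:E).
  exact/measurable_funeM/emeasurable_expL2_integrand.
under eq_integral => x _ do rewrite EFinM 2!EFinD EFinM.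
rewrite ge0_integralZl//; last 2 first.
- by apply: emeasurable_funD => //; exact: emeasurable_funD.
- by move=> x _; rewrite !adde_ge0.
congr (_ * _).
rewrite ge0_integralD//; [|by move=> x _; rewrite adde_ge0 | exact: emeasurable_funD].
by rewrite ge0_integralD// ge0_integralZl//; exact: emeasurable_expL2_integrand.
Qed.

Lemma Linf_norm_ae (v : T -> R) : in_Linf mu v ->
  \forall x \ae mu, (`|v x| <= Linf_norm mu v)%R.
Proof.
move=> [_]; rewrite /Linf_norm unlock /=.
case: ifPn => [mu_gt0 ess_lt | ]; last first.
  rewrite -leNgt => mu_le0 _; apply: measure0_ae.
  by apply/eqP; rewrite eq_le mu_le0 measure_ge0.
have ess_ge0 : 0 <= ess_sup mu (abse \o (EFin \o v)).
  by apply: ess_sup_gee => //; apply: aeW => x; exact: abse_ge0.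
apply: filterS (ess_sup_ge mu (abse \o (EFin \o v))) => x /= vx.
by rewrite -lee_fin fineK ?ge0_fin_numE.
Qed.

Lemma Lnorm_le_of_integral_powR (F : T -> R) (q A : R) : (0 < q)%R -> (0 <= A)%R ->
  \int[mu]_x (`|F x| `^ q)%:E <= (A `^ q)%:E -> 'N[mu]_q%:E[EFin \o F] <= A%:E.
Proof.
move=> q0 A0 int_le; rewrite unlock /=.
have qV0 : (0 <= q^-1)%R by rewrite invr_ge0 ltW.
apply: le_trans (gt0_ler_poweR qV0 _ _ int_le) _.
- by rewrite in_itv /= leey andbT integral_ge0// => x _; rewrite lee_fin powR_ge0.
- by rewrite in_itv /= leey andbT lee_fin powR_ge0.
by rewrite poweR_EFin -powRrM mulfV ?gt_eqF// powRr1.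
Qed.

End expL2_integral_facts.

Section growth_Lnorm.
Context {d : measure_display} {T : measurableType d} {R : realType}.
Variable mu : {measure set T -> \bar R}.
Context {f : R -> R} {C lam : R}.
Hypotheses (C_ge0 : 0 <= C) (lam_ge0 : 0 <= lam).
Hypothesis f_growth : forall u v : R,
  `|f u - f v| <= C * `|u - v| * (expR (lam * u ^+ 2) + expR (lam * v ^+ 2)).

Lemma integral_growth_shift_powR_le {v w1 w2 : T -> R} {q a b : R} {m : nat} :
  in_Linf mu v -> measurable_fun setT w1 -> measurable_fun setT w2 ->
  2 <= q -> 3 * q <= m.+1%:R -> 0 < a -> 0 < b -> 3 * lam * q * b ^+ 2 <= 1 ->
  (\int[mu]_x (`|f (w1 x + v x) - f (w2 x + v x)| `^ q)%:E
   <= ((2 * C * expR (2 * lam * Linf_norm mu v ^+ 2) * a) `^ q)%:E *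
      ((2 * (1 + m.+1`!%:R))%:E * expL2_integral mu (w1 \- w2)%R a
       + expL2_integral mu w1 b + expL2_integral mu w2 b))%E.
Proof.
move=> v_inf mw1 mw2 q2 qm a0 b0 qb.
have c0 : 0 <= 2 * (1 + m.+1`!%:R) :> R by rewrite mulr_ge0 ?addr_ge0.
have mF : measurable_fun setT (fun x => f (w1 x + v x) - f (w2 x + v x)).
  have mf := continuous_measurable_fun (growth_continuous f_growth).
  by apply: measurable_funB; apply: measurableT_comp => //;
    apply: measurable_funD => //; case: v_inf.
rewrite -integral_expL2_comb ?powR_ge0//; last exact: measurable_funB.
apply: ae_ge0_le_integral => //.
- apply/measurable_EFinP; apply: (measurableT_comp (measurable_powR q)).
  exact: measurableT_comp.
- move=> x _; rewrite lee_fin; apply: mulr_ge0; first exact: powR_ge0.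
  by apply: addr_ge0; [apply: addr_ge0; [apply: mulr_ge0 |] |];
    rewrite ?expL2_integrand_ge0.
- apply/measurable_EFinP; apply: measurable_funM => //.
  have mD : measurable_fun setT (w1 \- w2) by exact: measurable_funB.
  by apply: measurable_funD; [apply: measurable_funD; [apply: measurable_funM => //|] |];
    apply: measurable_expL2_integrand.
apply: filterS (Linf_norm_ae mu v v_inf) => x vx _; rewrite lee_fin.
exact: growth_shift_powR_le.
Qed.

Lemma Lnorm_growth_shift_le {v w1 w2 : T -> R} {q a b : R} {m : nat} :
  in_Linf mu v -> measurable_fun setT w1 -> measurable_fun setT w2 ->
  2 <= q -> 3 * q <= m.+1%:R -> 0 < b -> 3 * lam * q * b ^+ 2 <= 1 ->
  (expL2_integral mu w1 b <= 1)%E -> (expL2_integral mu w2 b <= 1)%E ->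
  0 < a -> (expL2_norm mu (w1 \- w2)%R < a%:E)%E ->
  ('N[mu]_q%:E[EFin \o (fun x => f (w1 x + v x) - f (w2 x + v x))%R]
    <= (2 * C * (2 * (1 + m.+1`!%:R) + 2) * expR (2 * lam * Linf_norm mu v ^+ 2) * a)%:E)%E.
Proof.
move=> v_inf mw1 mw2 q2 qm b0 qb int1 int2 a0 norm_lt.
have := integral_growth_shift_powR_le v_inf mw1 mw2 q2 qm a0 b0 qb.
set G := expR _; set c := 1 + _; set k := 2 * c + 2; set B := _ * a => int_le.
have B0 : 0 <= B by rewrite !mulr_ge0 ?expR_ge0 // ltW.
have c1 : 1 <= c by rewrite lerDl.
have k1 : 1 <= k by rewrite /k; lra.
have k0 : 0 <= k by lra.
have int0 := expL2_integral_le1 mu _ a (measurable_funB mw1 mw2) norm_lt.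
apply: Lnorm_le_of_integral_powR; [lra | by rewrite !mulr_ge0 ?expR_ge0 // ltW |].
apply: (le_trans int_le).
apply: le_trans (_ : (B `^ q)%:E * ((2 * c)%:E * 1 + 1 + 1) <= _)%E.
  apply: lee_wpmul2l; first by rewrite lee_fin powR_ge0.
  by apply: leeD => //; apply: leeD => //; apply: lee_wpmul2l => //; rewrite lee_fin; lra.
rewrite mule1 -!EFinD -EFinM lee_fin.
rewrite (_ : 2 * C * k * G * a = B * k); last by rewrite /B; ring.
rewrite powRM //; apply: ler_wpM2l; first exact: powR_ge0.
by apply: le_trans (le1r_powR _ _); rewrite /k; lra.
Qed.

End growth_Lnorm.

Theorem lemma4p4 (R : realType) (d : measure_display) (T : measurableType d)
  (mu : {measure set T -> \bar R}) (f : R -> R) (C lam K q : R) :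
  f 0 = 0 -> 0 < C -> 0 < lam ->
  (forall u v : R, `|f u - f v| <= C * `|u - v| * (expR (lam * u ^+ 2) + expR (lam * v ^+ 2))) ->
  0 < K -> 2 <= q -> 4 * lam * q * K ^+ 2 <= 1 ->
  exists Cq : R, 0 < Cq /\
    forall v w1 w2 : T -> R,
      in_Linf mu v -> in_expL2 mu w1 -> in_expL2 mu w2 ->
      (expL2_norm mu w1 <= K%:E)%E -> (expL2_norm mu w2 <= K%:E)%E ->
      ('N[mu]_(q%:E)[EFin \o (fun x => f (w1 x + v x) - f (w2 x + v x))%R]
        <= (Cq * expR (2 * lam * Linf_norm mu v ^+ 2))%:E * expL2_norm mu (w1 \- w2)%R)%E.
Proof.
move=> _ C0 lam0 f_growth K0 q2 qK.
have [m qm] : exists m : nat, 3 * q <= m.+1%:R.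
  by exists (Num.truncn (3 * q)); apply/ltW/truncnS_gt.
have k_gt0 : 0 < 2 * (1 + m.+1`!%:R) + 2 :> R by rewrite ltr_wpDl ?mulr_ge0 ?addr_ge0.
exists (2 * C * (2 * (1 + m.+1`!%:R) + 2)); split; first by rewrite !mulr_gt0.
move=> v w1 w2 v_inf [mw1 _] [mw2 _] w1K w2K.
pose b := Num.sqrt (4 * K ^+ 2 / 3).
have b2 : b ^+ 2 = 4 * K ^+ 2 / 3 by rewrite sqr_sqrtr //; have := sqr_ge0 K; lra.
have b0 : 0 <= b by exact: sqrtr_ge0.
have Kb : K < b by nra.
have qb : 3 * lam * q * b ^+ 2 <= 1.
  by rewrite b2 (_ : 3 * lam * q * _ = 4 * lam * q * K ^+ 2) //; field.
have int_le1 w : measurable_fun setT w -> (expL2_norm mu w <= K%:E)%E ->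
    (expL2_integral mu w b <= 1)%E.
  by move=> mw wK; apply: expL2_integral_le1 => //; apply: le_lt_trans wK _; rewrite lte_fin.
apply: lee_pmul_of_gt; [by rewrite !mulr_gt0 ?expR_gt0 | exact: expL2_norm_ge0 |].
move=> a a0 Da.
exact: (Lnorm_growth_shift_le mu (ltW C0) (ltW lam0) f_growth v_inf mw1 mw2 q2 qm
  (lt_trans K0 Kb) qb (int_le1 _ mw1 w1K) (int_le1 _ mw2 w2K) a0 Da).
Qed.
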